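(* Fix $\sigma^2>0$. For $\delta>0$ let $\rho_0=\frac{\delta}{1+\sigma^2}$ and define $\phi^{-1}_\delta:[0,\infty)\to\mathbb R$ by $\phi^{-1}_\delta(\rho)=1$ for $0\le\rho<\rho_0$ and $\phi^{-1}_\delta(\rho)=\frac{\delta}{\rho}-\sigma^2$ for $\rho\ge\rho_0$. Let $$\mathrm{mmse}(\mathcal B,\rho)=1-\int_{-\infty}^{\infty}\frac{e^{-x^2/2}}{\sqrt{2\pi}}\tanh\!\left(\rho-\sqrt{\rho}\,x\right)\mathrm{d}x,$$ let $\psi^{opt}_{\mathcal B}(\rho)=\min\{\phi^{-1}_\delta(\rho),\mathrm{mmse}(\mathcal B,\rho)\}$, and $$a_{\mathcal B}(\delta)=\int_0^\infty\big(\phi^{-1}_\delta(\rho)-\psi^{opt}_{\mathcal B}(\rho)\big)\,\mathrm d\rho .$$ Define $R_{\mathrm{AC}}(\delta)=C_{\mathrm G}-\frac{a_{\mathcal B}(\delta)}{2\delta}$ with $C_{\mathrm G}=\frac12\ln(1+1/\sigma^2)$. Then $a_{\mathcal B}(\delta)/(2\delta)\to0$, i.e. $R_{\mathrm{AC}}(\delta)\to C_{\mathrm G}$, as $\delta\to0$.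
   Context: $\mathrm{mmse}(\mathcal B,\rho)$ is the minimum mean-squared error of estimating a uniformly distributed $s\in\{+1,-1\}$ from $\sqrt\rho\,s+w$ with $w\sim\mathcal N(0,1)$ independent of $s$. $\phi^{-1}_\delta$ is the (extended) inverse of $\phi(v)=\delta/(v+\sigma^2)$, $v\in[0,1]$. In the paper's interpretation, $R_{\mathrm{AC}}$ is the rate of a compressed coding scheme with BPSK whose decoder transfer curve meets the matching condition $\psi=\psi^{opt}_{\mathcal B}$, and $\delta\to0$ is taken together with the underlying code rate $R_{\mathrm C}=\delta R_{\mathrm{AC}}\to0$. *)

From Stdlib Require Import Reals Lra ClassicalEpsilon.
Open Scope R_scope.

Definition Rint (f : R -> R) (a b v : R) : Prop :=
  exists pr : Riemann_integrable f a b, RiemannInt pr = v.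

Definition improper_int_0_inf (f : R -> R) (l : R) : Prop :=
  (forall b, 0 <= b -> exists v, Rint f 0 b v) /\
  (forall eps, 0 < eps -> exists M, forall b v,
      M <= b -> Rint f 0 b v -> Rabs (v - l) < eps).

Definition improper_int_R (f : R -> R) (l : R) : Prop :=
  (forall a b, a <= b -> exists v, Rint f a b v) /\
  (forall eps, 0 < eps -> exists M, forall a b v,
      a <= - M -> M <= b -> Rint f a b v -> Rabs (v - l) < eps).

(* The value of a convergent improper integral (chosen by epsilon;
   meaningful whenever the integral converges, since the limit is unique). *)
Definition int_0_inf (f : R -> R) : R :=
  epsilon (inhabits 0) (fun l => improper_int_0_inf f l).

Definition int_R (f : R -> R) : R :=
  epsilon (inhabits 0) (fun l => improper_int_R f l).

(* Extended inverse of phi(v) = delta/(v + sigma2), v in [0,1]. *)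
Definition phi_inv (sigma2 delta rho : R) : R :=
  let rho0 := delta / (1 + sigma2) in
  if Rlt_dec rho rho0 then 1 else delta / rho - sigma2.

Definition gauss (x : R) : R := exp (- x ^ 2 / 2) / sqrt (2 * PI).

Definition mmse_B (rho : R) : R :=
  1 - int_R (fun x => gauss x * tanh (rho - sqrt rho * x)).

Definition psi_opt_B (sigma2 delta rho : R) : R :=
  Rmin (phi_inv sigma2 delta rho) (mmse_B rho).

Definition a_B (sigma2 delta : R) : R :=
  int_0_inf (fun rho => phi_inv sigma2 delta rho - psi_opt_B sigma2 delta rho).

Definition C_G (sigma2 : R) : R := / 2 * ln (1 + / sigma2).

Definition R_AC (sigma2 delta : R) : R := C_G sigma2 - a_B sigma2 delta / (2 * delta).

(* Beyond rho = delta / sigma2 the constraint phi_inv is nonpositive while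
   mmse = 1 - E[tanh] is nonnegative, so the integrand of a_B vanishes there;
   below it, it is at most |E[tanh(rho - sqrt rho Z)]|.  Since tanh is
   1-Lipschitz and tanh 0 = 0, that expectation is at most rho + sqrt 2 sqrt rho
   (E|Z| is bounded through int exp(-t^2) <= sqrt PI).  Hence
   a_B(delta) = O(delta^(3/2)) and a_B(delta) / (2 delta) = O(sqrt delta).
   The Gaussian bound comes from the classical identity
   (int_0^x exp(-t^2) dt)^2 + int_0^1 exp(-x^2 (1 + t^2)) / (1 + t^2) dt = PI / 4,
   whose left side has zero derivative. *)

From Stdlib Require Import Reals Lra Classical ClassicalEpsilon FunctionalExtensionality.
From Coquelicot Require Import Coquelicot.
Open Scope R_scope.

Lemma ex_RInt_of_continuous (f : R -> R) a b :
  (forall x, continuous f x) -> ex_RInt f a b.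
Proof. intros Hf. apply (ex_RInt_continuous f). intros x _. apply Hf. Qed.

Lemma continuous_of_ex_derive (f : R -> R) x : ex_derive f x -> continuous f x.
Proof. apply (ex_derive_continuous f). Qed.

Lemma Rint_RInt (f : R -> R) a b : ex_RInt f a b -> Rint f a b (RInt f a b).
Proof. intros H. exists (ex_RInt_Reals_0 _ _ _ H). symmetry. apply RInt_Reals. Qed.

Lemma Rint_eq_RInt (f : R -> R) a b v : Rint f a b v -> v = RInt f a b.
Proof. intros [pr <-]. symmetry. apply RInt_Reals. Qed.

Lemma RInt_ge_0_continuous (f : R -> R) a b :
  a <= b -> (forall x, continuous f x) -> (forall x, 0 <= f x) -> 0 <= RInt f a b.
Proof. intros Hab Hc Hp. apply RInt_ge_0; auto. apply ex_RInt_of_continuous, Hc. Qed.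

Definition int_exp_sq (x : R) : R := RInt (fun t => exp (- (t * t))) 0 x.

Definition gauss_aux_integrand (x t : R) : R := exp (- (x * x) * (1 + t * t)) / (1 + t * t).

Definition gauss_aux (x : R) : R := RInt (gauss_aux_integrand x) 0 1.

Lemma continuous_exp_neg_sq x : continuous (fun t => exp (- (t * t))) x.
Proof. apply continuous_of_ex_derive. auto_derive. auto. Qed.

Lemma is_derive_int_exp_sq x : is_derive int_exp_sq x (exp (- (x * x))).
Proof.
  apply (is_derive_RInt (fun t => exp (- (t * t))) int_exp_sq 0).
  - apply filter_forall. intros b. unfold int_exp_sq.
    apply (RInt_correct (fun t => exp (- (t * t)))).
    apply ex_RInt_of_continuous, continuous_exp_neg_sq.
  - apply continuous_exp_neg_sq.
Qed.

Lemma is_derive_gauss_aux_integrand x t :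
  is_derive (fun u => gauss_aux_integrand u t) x (- 2 * x * exp (- (x * x) * (1 + t * t))).
Proof.
  unfold gauss_aux_integrand. assert (0 < 1 + t * t) by nra.
  auto_derive; [lra | field; lra].
Qed.

Lemma continuous_gauss_aux_integrand x t : continuous (gauss_aux_integrand x) t.
Proof.
  apply continuous_of_ex_derive. unfold gauss_aux_integrand. auto_derive. nra.
Qed.

Lemma is_derive_gauss_aux x :
  is_derive gauss_aux x (- 2 * exp (- (x * x)) * int_exp_sq x).
Proof.
  replace (- 2 * exp (- (x * x)) * int_exp_sq x)
    with (RInt (fun t => Derive (fun u => gauss_aux_integrand u t) x) 0 1).
  { apply (is_derive_RInt_param gauss_aux_integrand 0 1 x).
    - apply filter_forall. intros y t _. eexists. apply is_derive_gauss_aux_integrand.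
    - intros t _.
      apply continuity_2d_pt_ext with
        (f := fun u v => - 2 * u * exp (- (u * u) * (1 + v * v))).
      { intros u v. symmetry. apply is_derive_unique, is_derive_gauss_aux_integrand. }
      repeat first [ apply continuity_2d_pt_mult | apply continuity_2d_pt_plus
                   | apply continuity_2d_pt_opp | apply continuity_2d_pt_const
                   | apply continuity_2d_pt_id1 | apply continuity_2d_pt_id2
                   | apply continuity_1d_2d_pt_comp;
                     [apply derivable_continuous_pt, derivable_pt_exp|] ].
    - apply filter_forall. intros y.
      apply ex_RInt_of_continuous, continuous_gauss_aux_integrand. }
  (* substituting s = x t turns the parameter derivative into [int_exp_sq x] *)
  rewrite (RInt_ext _
    (fun t => (- 2 * exp (- (x * x))) * (x * exp (- ((x * t + 0) * (x * t + 0)))))).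
  - rewrite (RInt_scal (fun t => x * exp (- ((x * t + 0) * (x * t + 0))))).
    + rewrite (RInt_comp_lin (fun s => exp (- (s * s)))).
      * unfold int_exp_sq. rewrite Rmult_0_r, Rplus_0_r, Rmult_1_r, Rplus_0_r.
        reflexivity.
      * apply ex_RInt_of_continuous, continuous_exp_neg_sq.
    + apply (ex_RInt_comp_lin (fun s => exp (- (s * s)))).
      apply ex_RInt_of_continuous, continuous_exp_neg_sq.
  - intros t _. transitivity (- 2 * x * exp (- (x * x) * (1 + t * t))).
    { apply is_derive_unique, is_derive_gauss_aux_integrand. }
    replace (- (x * x) * (1 + t * t)) with (- (x * x) + - ((x * t + 0) * (x * t + 0))) by ring.
    rewrite exp_plus. match goal with |- ?a = ?b => change (@eq R a b) end. ring.
Qed.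

Lemma gauss_aux_0 : gauss_aux 0 = PI / 4.
Proof.
  rewrite <- atan_1. replace (atan 1) with (atan 1 - atan 0) by (rewrite atan_0; ring).
  unfold gauss_aux.
  rewrite (RInt_ext _ (fun t => / (1 + t ^ 2))).
  - apply is_RInt_unique. apply (is_RInt_derive atan).
    + intros x _. apply is_derive_Reals, derivable_pt_lim_atan.
    + intros x _. apply continuous_of_ex_derive. auto_derive. nra.
  - intros t _. unfold gauss_aux_integrand.
    match goal with |- ?a = ?b => change (@eq R a b) end.
    replace (- (0 * 0) * (1 + t * t)) with 0 by ring. rewrite exp_0. field. nra.
Qed.

Lemma gauss_aux_ge_0 x : 0 <= gauss_aux x.
Proof.
  apply RInt_ge_0_continuous; [lra | apply continuous_gauss_aux_integrand |].
  intros t. unfold gauss_aux_integrand. apply Rlt_le, Rdiv_lt_0_compat; [apply exp_pos | nra].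
Qed.

Lemma gauss_aux_plus_int_exp_sq x : gauss_aux x + int_exp_sq x ^ 2 = PI / 4.
Proof.
  set (h y := gauss_aux y + int_exp_sq y ^ 2).
  assert (Hh : forall y, is_derive h y 0).
  { intros y.
    replace 0 with (- 2 * exp (- (y * y)) * int_exp_sq y
                    + INR 2 * exp (- (y * y)) * int_exp_sq y ^ 1) by (simpl; ring).
    apply (is_derive_plus gauss_aux); [apply is_derive_gauss_aux |].
    apply (is_derive_pow int_exp_sq 2), is_derive_int_exp_sq. }
  assert (Hconst : h x = h 0).
  { destruct (MVT_gen h 0 x (fun _ => 0)) as [c [_ Hc]].
    - intros y _. apply Hh.
    - intros y _. apply continuity_pt_filterlim, continuous_of_ex_derive.
      eexists. apply Hh.
    - lra. }
  unfold h in Hconst. rewrite Hconst, gauss_aux_0. unfold int_exp_sq.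
  rewrite RInt_point. simpl. change zero with 0. ring.
Qed.

Lemma Rabs_int_exp_sq_le x : Rabs (int_exp_sq x) <= sqrt PI / 2.
Proof.
  pose proof (gauss_aux_plus_int_exp_sq x). pose proof (gauss_aux_ge_0 x).
  pose proof PI_RGT_0 as HPI. pose proof (sqrt_sqrt PI (Rlt_le _ _ HPI)). pose proof (sqrt_pos PI).
  apply Rabs_le. split; nra.
Qed.

Lemma RInt_exp_neg_scaled_sq_le k a b :
  0 < k -> RInt (fun t => exp (- ((k * t) * (k * t)))) a b <= sqrt PI / k.
Proof.
  intros Hk.
  assert (Hex : ex_RInt (fun s => exp (- (s * s))) (k * a + 0) (k * b + 0)).
  { apply ex_RInt_of_continuous, continuous_exp_neg_sq. }
  rewrite (RInt_ext _ (fun t => / k * (k * exp (- ((k * t + 0) * (k * t + 0)))))).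
  2: { intros t _. rewrite Rplus_0_r. match goal with |- ?a = ?b => change (@eq R a b) end.
       field. lra. }
  rewrite (RInt_scal (fun t => k * exp (- ((k * t + 0) * (k * t + 0))))).
  2: { apply (ex_RInt_comp_lin (fun s => exp (- (s * s)))). exact Hex. }
  rewrite (RInt_comp_lin (fun s => exp (- (s * s)))) by exact Hex.
  rewrite <- (RInt_Chasles (fun s => exp (- (s * s))) (k * a + 0) 0 (k * b + 0)).
  2, 3: apply ex_RInt_of_continuous, continuous_exp_neg_sq.
  rewrite <- (opp_RInt_swap (fun s => exp (- (s * s))))
    by apply ex_RInt_of_continuous, continuous_exp_neg_sq.
  fold (int_exp_sq (k * a + 0)) (int_exp_sq (k * b + 0)).
  pose proof (proj1 (Rabs_le_between _ _) (Rabs_int_exp_sq_le (k * a + 0))).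
  pose proof (proj1 (Rabs_le_between _ _) (Rabs_int_exp_sq_le (k * b + 0))).
  change (plus ?u ?v) with (u + v). change (opp ?u) with (- u). change (scal ?u ?v) with (u * v).
  unfold Rdiv. rewrite (Rmult_comm (sqrt PI)).
  apply Rmult_le_compat_l; [apply Rlt_le, Rinv_0_lt_compat, Hk | lra].
Qed.

Lemma sqrt2_sq : sqrt 2 * sqrt 2 = 2.
Proof. apply sqrt_sqrt. lra. Qed.

Lemma sqrt_2PI_pos : 0 < sqrt (2 * PI).
Proof. apply sqrt_lt_R0. pose proof PI_RGT_0. lra. Qed.

Lemma sqrt_2PI_eq : sqrt (2 * PI) = sqrt 2 * sqrt PI.
Proof. apply sqrt_mult; pose proof PI_RGT_0; lra. Qed.

Lemma gauss_pos x : 0 < gauss x.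
Proof. apply Rdiv_lt_0_compat; [apply exp_pos | apply sqrt_2PI_pos]. Qed.

Lemma continuous_gauss x : continuous gauss x.
Proof.
  apply continuous_of_ex_derive. unfold gauss. auto_derive.
  pose proof sqrt_2PI_pos. lra.
Qed.

Lemma RInt_gauss_scaled_le k a b :
  0 < k -> RInt (fun x => exp (- ((k * x) * (k * x))) / sqrt (2 * PI)) a b
           <= / (k * sqrt 2).
Proof.
  intros Hk. pose proof sqrt_2PI_pos. pose proof (sqrt_lt_R0 PI PI_RGT_0).
  assert (0 < sqrt 2) by (apply sqrt_lt_R0; lra).
  rewrite (RInt_ext _ (fun x => / sqrt (2 * PI) * exp (- ((k * x) * (k * x))))).
  2: { intros x _. match goal with |- ?a = ?b => change (@eq R a b) end.
       unfold Rdiv. ring. }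
  rewrite (RInt_scal (fun x => exp (- ((k * x) * (k * x))))).
  2: { apply ex_RInt_of_continuous. intros x. apply continuous_of_ex_derive. auto_derive. auto. }
  change (scal ?u ?v) with (u * v).
  replace (/ (k * sqrt 2)) with (/ sqrt (2 * PI) * (sqrt PI / k))
    by (rewrite sqrt_2PI_eq; field; lra).
  apply Rmult_le_compat_l; [apply Rlt_le, Rinv_0_lt_compat; lra |].
  apply RInt_exp_neg_scaled_sq_le, Hk.
Qed.

Lemma RInt_gauss_le_1 a b : RInt gauss a b <= 1.
Proof.
  assert (0 < sqrt 2) by (apply sqrt_lt_R0; lra).
  apply Rle_trans with (/ (/ sqrt 2 * sqrt 2)); [| right; field; lra].
  rewrite (RInt_ext _ (fun x => exp (- ((/ sqrt 2 * x) * (/ sqrt 2 * x))) / sqrt (2 * PI))).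
  { apply RInt_gauss_scaled_le, Rinv_0_lt_compat. lra. }
  intros x _. unfold gauss. do 3 f_equal.
  replace (/ sqrt 2 * x * (/ sqrt 2 * x)) with (x * x / (sqrt 2 * sqrt 2)) by (field; lra).
  rewrite sqrt2_sq. field.
Qed.

Lemma abs_mul_gauss_le x : Rabs x * gauss x <= exp (- ((/ 2 * x) * (/ 2 * x))) / sqrt (2 * PI).
Proof.
  unfold gauss, Rdiv. rewrite <- Rmult_assoc.
  apply Rmult_le_compat_r; [apply Rlt_le, Rinv_0_lt_compat, sqrt_2PI_pos |].
  (* [exp(-x^2/2) = exp(-x^2/4)^2] and [|x| exp(-x^2/4) <= |x| / (1 + x^2/4) <= 1] *)
  replace (- x ^ 2 * / 2) with (- ((/ 2 * x) * (/ 2 * x)) + - ((/ 2 * x) * (/ 2 * x))) by field.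
  rewrite exp_plus.
  assert (Hinv : exp (- ((/ 2 * x) * (/ 2 * x))) * exp ((/ 2 * x) * (/ 2 * x)) = 1).
  { rewrite <- exp_plus, Rplus_opp_l. apply exp_0. }
  pose proof (exp_pos (- ((/ 2 * x) * (/ 2 * x)))).
  pose proof (exp_ineq1_le ((/ 2 * x) * (/ 2 * x))).
  assert (Rabs x <= 1 + (/ 2 * x) * (/ 2 * x)).
  { pose proof (pow2_ge_0 (1 - x / 2)). pose proof (pow2_ge_0 (1 + x / 2)).
    destruct (Rle_dec 0 x); [rewrite Rabs_right | rewrite Rabs_left]; nra. }
  pose proof (Rabs_pos x). nra.
Qed.

Lemma continuous_abs_mul_gauss x : continuous (fun x => Rabs x * gauss x) x.
Proof. apply (continuous_mult Rabs gauss); [apply continuous_Rabs | apply continuous_gauss]. Qed.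

Lemma RInt_abs_mul_gauss_le a b : a <= b -> RInt (fun x => Rabs x * gauss x) a b <= sqrt 2.
Proof.
  intros Hab. assert (0 < sqrt 2) by (apply sqrt_lt_R0; lra).
  apply Rle_trans with (RInt (fun x => exp (- ((/ 2 * x) * (/ 2 * x))) / sqrt (2 * PI)) a b).
  - apply RInt_le; [exact Hab | | | intros x _; apply abs_mul_gauss_le];
      apply ex_RInt_of_continuous; intros x.
    + apply continuous_abs_mul_gauss.
    + apply continuous_of_ex_derive. auto_derive. pose proof sqrt_2PI_pos. lra.
  - apply Rle_trans with (/ (/ 2 * sqrt 2)).
    + apply RInt_gauss_scaled_le. lra.
    + right. replace (/ (/ 2 * sqrt 2)) with (sqrt 2 * sqrt 2 / sqrt 2)
        by (rewrite sqrt2_sq; field; lra).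
      field. lra.
Qed.

Lemma tanh_exp u : tanh u = (exp u - exp (- u)) / (exp u + exp (- u)).
Proof.
  unfold tanh, sinh, cosh. pose proof (exp_pos u). pose proof (exp_pos (- u)).
  field. lra.
Qed.

Lemma Rabs_tanh_le_1 u : Rabs (tanh u) <= 1.
Proof.
  rewrite tanh_exp. pose proof (exp_pos u). pose proof (exp_pos (- u)).
  apply Rabs_le. split; [apply Rle_div_r | apply Rle_div_l]; lra.
Qed.

Lemma tanh_0 : tanh 0 = 0.
Proof. rewrite tanh_exp, Ropp_0. unfold Rdiv. rewrite Rminus_diag. ring. Qed.

Lemma is_derive_tanh u : is_derive tanh u (4 / (exp u + exp (- u)) ^ 2).
Proof.
  pose proof (exp_pos u). pose proof (exp_pos (- u)).
  assert (Hinv : exp u * exp (- u) = 1) by (rewrite <- exp_plus, Rplus_opp_r; apply exp_0).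
  apply (is_derive_ext (fun v => (exp v - exp (- v)) / (exp v + exp (- v)))).
  { intros v. symmetry. apply tanh_exp. }
  auto_derive; [lra |].
  field_simplify; [| lra | lra]. rewrite Rmult_assoc, Hinv. field. nra.
Qed.

Lemma continuous_tanh u : continuous tanh u.
Proof. apply continuous_of_ex_derive. eexists. apply is_derive_tanh. Qed.

Lemma tanh_1_lipschitz u v : Rabs (tanh u - tanh v) <= Rabs (u - v).
Proof.
  destruct (MVT_abs tanh (fun c => 4 / (exp c + exp (- c)) ^ 2) v u) as [c [Hc _]].
  { intros c _. apply is_derive_Reals, is_derive_tanh. }
  rewrite Hc. rewrite <- (Rmult_1_l (Rabs (u - v))) at 2.
  apply Rmult_le_compat_r; [apply Rabs_pos |].
  pose proof (exp_pos c). pose proof (exp_pos (- c)).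
  assert (exp c * exp (- c) = 1) by (rewrite <- exp_plus, Rplus_opp_r; apply exp_0).
  (* [(e^c + e^-c)^2 >= 4 e^c e^-c = 4] *)
  rewrite Rabs_right by (apply Rle_ge, Rlt_le, Rdiv_lt_0_compat; [lra | apply pow_lt; lra]).
  apply Rle_div_l; [apply pow_lt; lra |].
  pose proof (pow2_ge_0 (exp c - exp (- c))). nra.
Qed.

Lemma RInt_le_RInt_superinterval (p : R -> R) a a' b' b :
  (forall x, continuous p x) -> (forall x, 0 <= p x) ->
  a <= a' -> a' <= b' -> b' <= b -> RInt p a' b' <= RInt p a b.
Proof.
  intros Hc Hp Ha Hab Hb.
  rewrite <- (RInt_Chasles p a a' b), <- (RInt_Chasles p a' b' b) by
    (apply ex_RInt_of_continuous, Hc).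
  pose proof (RInt_ge_0_continuous p a a' Ha Hc Hp).
  pose proof (RInt_ge_0_continuous p b' b Hb Hc Hp).
  repeat change (plus ?u ?v) with (u + v). lra.
Qed.

(* The integrals over [a, b] increase with [a, b]; their supremum is the limit. *)
Lemma improper_int_R_of_nonneg (p : R -> R) B :
  (forall x, continuous p x) -> (forall x, 0 <= p x) ->
  (forall a b, a <= b -> RInt p a b <= B) -> exists l, improper_int_R p l.
Proof.
  intros Hc Hp HB.
  set (S y := exists a b, a <= b /\ y = RInt p a b).
  destruct (completeness S) as [l [Hub Hlub]].
  { exists B. intros y [a [b [Hab ->]]]. auto. }
  { exists (RInt p 0 0), 0, 0. split; [lra | reflexivity]. }
  exists l. split.
  { intros a b _. exists (RInt p a b). apply Rint_RInt, ex_RInt_of_continuous, Hc. }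
  intros eps Heps.
  assert (Hnear : exists a0 b0, a0 <= b0 /\ l - eps < RInt p a0 b0).
  { apply NNPP. intros Hn. enough (l <= l - eps) by lra.
    apply Hlub. intros y [a [b [Hab ->]]].
    apply Rnot_lt_le. intros Hlt. apply Hn. exists a, b. auto. }
  destruct Hnear as [a0 [b0 [Hab0 Hlt]]].
  exists (Rmax (Rabs a0) (Rabs b0)). intros a b v Ha Hb Hv.
  rewrite (Rint_eq_RInt _ _ _ _ Hv).
  pose proof (Rmax_l (Rabs a0) (Rabs b0)). pose proof (Rmax_r (Rabs a0) (Rabs b0)).
  pose proof (proj1 (Rabs_le_between a0 _) (Rle_refl _)).
  pose proof (proj1 (Rabs_le_between b0 _) (Rle_refl _)).
  pose proof (Rabs_pos a0).
  pose proof (RInt_le_RInt_superinterval p a a0 b0 b Hc Hp ltac:(lra) Hab0 ltac:(lra)).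
  assert (RInt p a b <= l) by (apply Hub; exists a, b; split; [lra | reflexivity]).
  apply Rabs_lt_between. lra.
Qed.

Lemma improper_int_R_minus (f g : R -> R) lf lg :
  (forall x, continuous f x) -> (forall x, continuous g x) ->
  improper_int_R f lf -> improper_int_R g lg ->
  improper_int_R (fun x => f x - g x) (lf - lg).
Proof.
  intros Hf Hg [_ Hlf] [_ Hlg].
  assert (Hexf : forall a b, ex_RInt f a b) by (intros; apply ex_RInt_of_continuous, Hf).
  assert (Hexg : forall a b, ex_RInt g a b) by (intros; apply ex_RInt_of_continuous, Hg).
  split.
  { intros a b _. eexists. apply Rint_RInt, (ex_RInt_minus f g); auto. }
  intros eps Heps.
  destruct (Hlf (eps / 2)) as [Mf HMf]; [lra |].
  destruct (Hlg (eps / 2)) as [Mg HMg]; [lra |].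
  exists (Rmax Mf Mg). intros a b v Ha Hb Hv.
  rewrite (Rint_eq_RInt _ _ _ _ Hv), (RInt_minus f g) by auto.
  pose proof (Rmax_l Mf Mg). pose proof (Rmax_r Mf Mg).
  pose proof (HMf a b _ ltac:(lra) ltac:(lra) (Rint_RInt _ _ _ (Hexf a b))) as Hf'.
  pose proof (HMg a b _ ltac:(lra) ltac:(lra) (Rint_RInt _ _ _ (Hexg a b))) as Hg'.
  apply Rabs_lt_between in Hf'. apply Rabs_lt_between in Hg'.
  apply Rabs_lt_between. change (minus ?u ?v) with (u - v). lra.
Qed.

(* [g = (g + h) - h] with both [g + h] and [h] nonnegative. *)
Lemma improper_int_R_of_dominated (g h : R -> R) B :
  (forall x, continuous g x) -> (forall x, continuous h x) ->
  (forall x, Rabs (g x) <= h x) -> (forall a b, a <= b -> RInt h a b <= B) ->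
  exists l, improper_int_R g l.
Proof.
  intros Hg Hh Hgh HB.
  assert (Hgh' : forall x, - h x <= g x <= h x) by (intros; apply Rabs_le_between, Hgh).
  assert (Hc : forall x, continuous (fun x => g x + h x) x)
    by (intros; apply (continuous_plus g h); auto).
  destruct (improper_int_R_of_nonneg (fun x => g x + h x) (B + B) Hc) as [l1 Hl1].
  { intros x. specialize (Hgh' x). lra. }
  { intros a b Hab. apply Rle_trans with (RInt (fun x => h x + h x) a b).
    - apply RInt_le; [exact Hab | apply ex_RInt_of_continuous, Hc | |].
      + apply ex_RInt_of_continuous. intros; apply (continuous_plus h h); auto.
      + intros x _. specialize (Hgh' x). lra.
    - rewrite (RInt_plus h h) by (apply ex_RInt_of_continuous, Hh).
      specialize (HB a b Hab). change (plus ?u ?v) with (u + v). lra. }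
  destruct (improper_int_R_of_nonneg h B Hh) as [l2 Hl2]; [| exact HB |].
  { intros x. pose proof (Rabs_pos (g x)). specialize (Hgh x). lra. }
  exists (l1 - l2).
  replace g with (fun x => (g x + h x) - h x) by (apply functional_extensionality; intros; ring).
  apply improper_int_R_minus; auto.
Qed.

Lemma improper_int_R_approx (g : R -> R) l : improper_int_R g l ->
  forall eps, 0 < eps -> exists b, 0 <= b /\ Rabs (RInt g (- b) b - l) < eps.
Proof.
  intros [Hex Hl] eps Heps. destruct (Hl eps Heps) as [M HM].
  exists (Rabs M). split; [apply Rabs_pos |].
  destruct (Hex (- Rabs M) (Rabs M)) as [v Hv]; [pose proof (Rabs_pos M); lra |].
  rewrite <- (Rint_eq_RInt _ _ _ _ Hv).
  apply (HM (- Rabs M) (Rabs M) v); [| apply Rle_abs | exact Hv].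
  pose proof (Rle_abs M). lra.
Qed.

Lemma improper_int_R_le (g : R -> R) l C : improper_int_R g l ->
  (forall a b, a <= b -> RInt g a b <= C) -> l <= C.
Proof.
  intros Hl HC. apply Rnot_lt_le. intros Hlt.
  destruct (improper_int_R_approx g l Hl (l - C)) as [b [Hb Happ]]; [lra |].
  specialize (HC (- b) b ltac:(lra)). apply Rabs_lt_between in Happ. lra.
Qed.

Lemma improper_int_R_abs_le (g : R -> R) l C : improper_int_R g l ->
  (forall a b, a <= b -> Rabs (RInt g a b) <= C) -> Rabs l <= C.
Proof.
  intros Hl HC. apply Rnot_lt_le. intros Hlt.
  destruct (improper_int_R_approx g l Hl (Rabs l - C)) as [b [Hb Happ]]; [lra |].
  specialize (HC (- b) b ltac:(lra)).
  pose proof (Rabs_triang_inv l (RInt g (- b) b)). rewrite Rabs_minus_sym in Happ. lra.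
Qed.

Lemma int_R_spec (g : R -> R) l : improper_int_R g l -> improper_int_R g (int_R g).
Proof. intros H. unfold int_R. apply epsilon_spec. exists l. exact H. Qed.

Definition mmse_integrand (rho x : R) : R := gauss x * tanh (rho - sqrt rho * x).

Definition mean_tanh (rho : R) : R := int_R (mmse_integrand rho).

Lemma mmse_B_mean_tanh rho : mmse_B rho = 1 - mean_tanh rho.
Proof. reflexivity. Qed.

Lemma continuous_mmse_integrand rho x : continuous (mmse_integrand rho) x.
Proof.
  apply (continuous_mult gauss); [apply continuous_gauss |].
  apply (continuous_comp (fun x => rho - sqrt rho * x) tanh); [| apply continuous_tanh].
  apply continuous_of_ex_derive. auto_derive. exact I.
Qed.

Lemma Rabs_mmse_integrand_le rho x : Rabs (mmse_integrand rho x) <= gauss x.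
Proof.
  unfold mmse_integrand. rewrite Rabs_mult, (Rabs_right (gauss x)).
  - rewrite <- (Rmult_1_r (gauss x)) at 2.
    apply Rmult_le_compat_l; [apply Rlt_le, gauss_pos | apply Rabs_tanh_le_1].
  - apply Rle_ge, Rlt_le, gauss_pos.
Qed.

Lemma mean_tanh_spec rho : improper_int_R (mmse_integrand rho) (mean_tanh rho).
Proof.
  destruct (improper_int_R_of_dominated (mmse_integrand rho) gauss 1) as [l Hl].
  - apply continuous_mmse_integrand.
  - apply continuous_gauss.
  - apply Rabs_mmse_integrand_le.
  - intros a b _. apply RInt_gauss_le_1.
  - exact (int_R_spec _ l Hl).
Qed.

Lemma mean_tanh_le_1 rho : mean_tanh rho <= 1.
Proof.
  apply (improper_int_R_le (mmse_integrand rho) _ 1 (mean_tanh_spec rho)).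
  intros a b Hab. apply Rle_trans with (RInt gauss a b); [| apply RInt_gauss_le_1].
  apply RInt_le; [exact Hab | | |].
  - apply ex_RInt_of_continuous, continuous_mmse_integrand.
  - apply ex_RInt_of_continuous, continuous_gauss.
  - intros x _. apply Rabs_le_between, Rabs_mmse_integrand_le.
Qed.

Lemma mmse_integrand_diff_le r s x :
  Rabs (mmse_integrand r x - mmse_integrand s x)
  <= Rabs (r - s) * gauss x + Rabs (sqrt r - sqrt s) * (Rabs x * gauss x).
Proof.
  unfold mmse_integrand. rewrite <- Rmult_minus_distr_l, Rabs_mult.
  rewrite (Rabs_right (gauss x)) by (apply Rle_ge, Rlt_le, gauss_pos).
  pose proof (gauss_pos x).
  pose proof (tanh_1_lipschitz (r - sqrt r * x) (s - sqrt s * x)) as Hlip.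
  replace (r - sqrt r * x - (s - sqrt s * x)) with ((r - s) + - ((sqrt r - sqrt s) * x))
    in Hlip by ring.
  pose proof (Rabs_triang (r - s) (- ((sqrt r - sqrt s) * x))) as Htri.
  rewrite Rabs_Ropp, Rabs_mult in Htri.
  assert (gauss x * Rabs (tanh (r - sqrt r * x) - tanh (s - sqrt s * x))
          <= gauss x * (Rabs (r - s) + Rabs (sqrt r - sqrt s) * Rabs x))
    by (apply Rmult_le_compat_l; lra).
  lra.
Qed.

Lemma RInt_gauss_first_moment_le c1 c2 a b : 0 <= c1 -> 0 <= c2 -> a <= b ->
  RInt (fun x => c1 * gauss x + c2 * (Rabs x * gauss x)) a b <= c1 + sqrt 2 * c2.
Proof.
  intros Hc1 Hc2 Hab.
  assert (Hexg : ex_RInt gauss a b) by (apply ex_RInt_of_continuous, continuous_gauss).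
  assert (Hexag : ex_RInt (fun x => Rabs x * gauss x) a b)
    by (apply ex_RInt_of_continuous, continuous_abs_mul_gauss).
  rewrite (RInt_plus (fun x => c1 * gauss x)).
  2: apply (ex_RInt_scal gauss), Hexg.
  2: apply (ex_RInt_scal (fun x => Rabs x * gauss x)), Hexag.
  rewrite (RInt_scal gauss), (RInt_scal (fun x => Rabs x * gauss x)) by assumption.
  change (plus ?u ?v) with (u + v). change (scal ?u ?v) with (u * v).
  assert (c1 * RInt gauss a b <= c1 * 1)
    by (apply Rmult_le_compat_l; [exact Hc1 | apply RInt_gauss_le_1]).
  assert (c2 * RInt (fun x => Rabs x * gauss x) a b <= c2 * sqrt 2)
    by (apply Rmult_le_compat_l; [exact Hc2 | apply RInt_abs_mul_gauss_le, Hab]).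
  lra.
Qed.

Lemma mean_tanh_lipschitz r s :
  Rabs (mean_tanh r - mean_tanh s) <= Rabs (r - s) + sqrt 2 * Rabs (sqrt r - sqrt s).
Proof.
  set (c1 := Rabs (r - s)). set (c2 := Rabs (sqrt r - sqrt s)).
  assert (Hcd : forall x, continuous (fun x => mmse_integrand r x - mmse_integrand s x) x).
  { intros x. apply (continuous_minus (mmse_integrand r)); apply continuous_mmse_integrand. }
  apply (improper_int_R_abs_le (fun x => mmse_integrand r x - mmse_integrand s x)).
  { apply improper_int_R_minus; auto using continuous_mmse_integrand, mean_tanh_spec. }
  intros a b Hab.
  apply Rle_trans with (RInt (fun x => Rabs (mmse_integrand r x - mmse_integrand s x)) a b).
  { apply (abs_RInt_le (fun x => mmse_integrand r x - mmse_integrand s x)); [exact Hab |].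
    apply ex_RInt_of_continuous, Hcd. }
  apply Rle_trans with (RInt (fun x => c1 * gauss x + c2 * (Rabs x * gauss x)) a b).
  2: { apply RInt_gauss_first_moment_le; [apply Rabs_pos | apply Rabs_pos | exact Hab]. }
  apply RInt_le; [exact Hab | | | intros x _; apply mmse_integrand_diff_le];
    apply ex_RInt_of_continuous; intros x.
  - apply continuous_Rabs_comp, Hcd.
  - apply (continuous_plus (fun x => c1 * gauss x)).
    + apply (continuous_mult (fun _ => c1)); [apply continuous_const | apply continuous_gauss].
    + apply (continuous_mult (fun _ => c2)); [apply continuous_const |].
      apply continuous_abs_mul_gauss.
Qed.

Lemma mean_tanh_0 : mean_tanh 0 = 0.
Proof.
  apply Rabs_eq_0, Rle_antisym; [| apply Rabs_pos].
  apply (improper_int_R_abs_le (mmse_integrand 0) _ 0 (mean_tanh_spec 0)).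
  intros a b _. rewrite (RInt_ext _ (fun _ => 0)).
  - rewrite RInt_const. change (scal (b - a) 0) with ((b - a) * 0).
    rewrite Rmult_0_r, Rabs_R0. apply Rle_refl.
  - intros x _. unfold mmse_integrand. rewrite sqrt_0.
    match goal with |- ?a = ?b => change (@eq R a b) end.
    rewrite Rmult_0_l, Rminus_0_r, tanh_0. apply Rmult_0_r.
Qed.

Lemma Rabs_mean_tanh_le rho : 0 <= rho -> Rabs (mean_tanh rho) <= rho + sqrt 2 * sqrt rho.
Proof.
  intros Hrho. pose proof (mean_tanh_lipschitz rho 0) as H.
  rewrite mean_tanh_0, sqrt_0, !Rminus_0_r, (Rabs_right rho), (Rabs_right (sqrt rho)) in H;
    [exact H | apply Rle_ge, sqrt_pos | lra].
Qed.

Lemma continuous_mean_tanh rho : continuous mean_tanh rho.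
Proof.
  apply continuity_pt_filterlim. intros eps Heps.
  assert (Hs2 : 0 < sqrt 2) by (apply sqrt_lt_R0; lra).
  destruct (proj2 (continuity_pt_filterlim sqrt rho) (continuous_sqrt rho)
              (eps / (2 * sqrt 2))) as [d [Hd Hsqrt]].
  { apply Rdiv_lt_0_compat; lra. }
  exists (Rmin d (eps / 2)). split; [apply Rmin_pos; lra |].
  intros y [_ Hy]. simpl in *. unfold R_dist in *.
  pose proof (Rmin_l d (eps / 2)). pose proof (Rmin_r d (eps / 2)).
  assert (Hsq : Rabs (sqrt y - sqrt rho) < eps / (2 * sqrt 2)).
  { destruct (Req_dec y rho) as [-> | Hne].
    - rewrite Rminus_diag, Rabs_R0. apply Rdiv_lt_0_compat; lra.
    - apply Hsqrt. split; [split; [exact I | auto] | lra]. }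
  pose proof (mean_tanh_lipschitz y rho).
  assert (Hsq2 : sqrt 2 * Rabs (sqrt y - sqrt rho) <= sqrt 2 * (eps / (2 * sqrt 2)))
    by (apply Rmult_le_compat_l; lra).
  replace (sqrt 2 * (eps / (2 * sqrt 2))) with (eps / 2) in Hsq2 by (field; lra).
  lra.
Qed.

Lemma continuous_Rmax (f g : R -> R) x :
  continuous f x -> continuous g x -> continuous (fun y => Rmax (f y) (g y)) x.
Proof.
  intros Hf Hg.
  apply (continuous_ext (fun y => (f y + g y + Rabs (f y - g y)) / 2)).
  { intros y. unfold Rmax. destruct (Rle_dec (f y) (g y));
      [rewrite Rabs_left1 | rewrite Rabs_right]; lra. }
  apply (continuous_comp (fun y => f y + g y + Rabs (f y - g y)) (fun z => z / 2)).
  - apply (continuous_plus (fun y => f y + g y)); [apply (continuous_plus f g); auto |].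
    apply continuous_Rabs_comp, (continuous_minus f g); auto.
  - apply continuous_of_ex_derive. auto_derive. exact I.
Qed.

Lemma continuous_Rmin (f g : R -> R) x :
  continuous f x -> continuous g x -> continuous (fun y => Rmin (f y) (g y)) x.
Proof.
  intros Hf Hg.
  apply (continuous_ext (fun y => - Rmax (- f y) (- g y))).
  { intros y. rewrite Ropp_Rmax, !Ropp_involutive. reflexivity. }
  apply (continuous_opp (fun y => Rmax (- f y) (- g y))).
  apply continuous_Rmax; [apply (continuous_opp f) | apply (continuous_opp g)]; auto.
Qed.

Definition a_B_integrand (sigma2 delta rho : R) : R :=
  phi_inv sigma2 delta rho - psi_opt_B sigma2 delta rho.

Section Integrand.

Variables (s d : R).
Hypotheses (Hs : 0 < s) (Hd : 0 < d).

Let rho0_pos : 0 < d / (1 + s).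
Proof. apply Rdiv_lt_0_compat; lra. Qed.

Lemma phi_inv_Rmax r : phi_inv s d r = d / Rmax r (d / (1 + s)) - s.
Proof.
  pose proof rho0_pos.
  unfold phi_inv, Rmax. destruct (Rle_dec r (d / (1 + s))).
  - destruct (Rlt_dec r (d / (1 + s))); [field; lra |].
    replace r with (d / (1 + s)) by lra. reflexivity.
  - destruct (Rlt_dec r (d / (1 + s))); [lra | reflexivity].
Qed.

Lemma phi_inv_le_1 r : phi_inv s d r <= 1.
Proof.
  rewrite phi_inv_Rmax.
  assert (Hle : d / Rmax r (d / (1 + s)) <= d / (d / (1 + s))).
  { apply Rmult_le_compat_l; [lra |].
    apply Rinv_le_contravar; [exact rho0_pos | apply Rmax_r]. }
  replace (d / (d / (1 + s))) with (1 + s) in Hle by (field; lra). lra.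
Qed.

Lemma phi_inv_nonpos r : d / s <= r -> phi_inv s d r <= 0.
Proof.
  intros Hr. rewrite phi_inv_Rmax.
  assert (0 < d / s) by (apply Rdiv_lt_0_compat; lra).
  assert (Hle : d / r <= d / (d / s)).
  { apply Rmult_le_compat_l; [lra |]. apply Rinv_le_contravar; lra. }
  replace (d / (d / s)) with s in Hle by (field; lra).
  apply Rle_trans with (d / r - s); [| lra].
  apply Rplus_le_compat_r, Rmult_le_compat_l; [lra |].
  apply Rinv_le_contravar; [lra | apply Rmax_l].
Qed.

Lemma continuous_phi_inv r : continuous (phi_inv s d) r.
Proof.
  apply (continuous_ext (fun r => d / Rmax r (d / (1 + s)) - s)).
  { intros y. symmetry. apply phi_inv_Rmax. }
  apply (continuous_comp (fun r => Rmax r (d / (1 + s))) (fun m => d / m - s)).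
  - apply continuous_Rmax; [apply continuous_id | apply continuous_const].
  - apply continuous_of_ex_derive. auto_derive.
    pose proof (Rmax_r r (d / (1 + s))). lra.
Qed.

Lemma continuous_a_B_integrand r : continuous (a_B_integrand s d) r.
Proof.
  apply (continuous_minus (phi_inv s d)); [apply continuous_phi_inv |].
  apply continuous_Rmin; [apply continuous_phi_inv |].
  apply (continuous_minus (fun _ => 1)); [apply continuous_const | apply continuous_mean_tanh].
Qed.

Lemma a_B_integrand_ge_0 r : 0 <= a_B_integrand s d r.
Proof.
  unfold a_B_integrand, psi_opt_B. pose proof (Rmin_l (phi_inv s d r) (mmse_B r)). lra.
Qed.

Lemma a_B_integrand_le r : a_B_integrand s d r <= Rabs (mean_tanh r).
Proof.
  unfold a_B_integrand, psi_opt_B. rewrite mmse_B_mean_tanh.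
  pose proof (phi_inv_le_1 r).
  pose proof (Rle_abs (mean_tanh r)). pose proof (Rabs_pos (mean_tanh r)).
  unfold Rmin. destruct (Rle_dec (phi_inv s d r) (1 - mean_tanh r)); lra.
Qed.

Lemma a_B_integrand_eq_0 r : d / s <= r -> a_B_integrand s d r = 0.
Proof.
  intros Hr. unfold a_B_integrand, psi_opt_B. rewrite Rmin_left; [ring |].
  rewrite mmse_B_mean_tanh. pose proof (mean_tanh_le_1 r). pose proof (phi_inv_nonpos r Hr).
  lra.
Qed.

Lemma improper_int_0_inf_a_B_integrand :
  improper_int_0_inf (a_B_integrand s d) (RInt (a_B_integrand s d) 0 (d / s)).
Proof.
  assert (Hex : forall a b, ex_RInt (a_B_integrand s d) a b)
    by (intros; apply ex_RInt_of_continuous, continuous_a_B_integrand).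
  split.
  { intros b _. eexists. apply Rint_RInt, Hex. }
  intros eps Heps. exists (d / s). intros b v Hb Hv.
  rewrite (Rint_eq_RInt _ _ _ _ Hv), <- (RInt_Chasles _ 0 (d / s) b) by apply Hex.
  rewrite (RInt_ext _ (fun _ => 0) (d / s) b), RInt_const.
  - change (plus ?u (scal ?w 0) - ?u) with (u + w * 0 - u).
    rewrite Rmult_0_r, Rplus_0_r, Rminus_diag, Rabs_R0. exact Heps.
  - intros x Hx. rewrite Rmin_left, Rmax_right in Hx by lra.
    apply a_B_integrand_eq_0. lra.
Qed.

End Integrand.

Lemma improper_int_0_inf_unique (f : R -> R) l1 l2 :
  improper_int_0_inf f l1 -> improper_int_0_inf f l2 -> l1 = l2.
Proof.
  intros [Hex Hl1] [_ Hl2]. apply NNPP. intros Hne.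
  assert (Hp : 0 < Rabs (l1 - l2) / 2) by (apply Rdiv_lt_0_compat; [apply Rabs_pos_lt | ]; lra).
  destruct (Hl1 _ Hp) as [M1 HM1]. destruct (Hl2 _ Hp) as [M2 HM2].
  set (b := Rmax (Rmax M1 M2) 0).
  pose proof (Rmax_l (Rmax M1 M2) 0). pose proof (Rmax_r (Rmax M1 M2) 0).
  pose proof (Rmax_l M1 M2). pose proof (Rmax_r M1 M2).
  destruct (Hex b ltac:(unfold b; lra)) as [v Hv].
  pose proof (HM1 b v ltac:(unfold b; lra) Hv). pose proof (HM2 b v ltac:(unfold b; lra) Hv).
  pose proof (Rabs_triang (l1 - v) (v - l2)) as Htri.
  replace (l1 - v + (v - l2)) with (l1 - l2) in Htri by ring.
  rewrite (Rabs_minus_sym l1 v) in Htri. lra.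
Qed.

Lemma a_B_RInt s d : 0 < s -> 0 < d -> a_B s d = RInt (a_B_integrand s d) 0 (d / s).
Proof.
  intros Hs Hd. apply (improper_int_0_inf_unique (a_B_integrand s d)).
  - unfold a_B, int_0_inf. apply epsilon_spec.
    eexists. apply improper_int_0_inf_a_B_integrand; auto.
  - apply improper_int_0_inf_a_B_integrand; auto.
Qed.

Lemma a_B_bounds s d : 0 < s -> 0 < d ->
  0 <= a_B s d <= (d / s) * (d / s + sqrt 2 * sqrt (d / s)).
Proof.
  intros Hs Hd. rewrite a_B_RInt by auto.
  assert (0 < d / s) by (apply Rdiv_lt_0_compat; auto).
  split.
  - apply RInt_ge_0_continuous; [lra | intros; apply continuous_a_B_integrand; auto |].
    apply a_B_integrand_ge_0.
  - apply Rle_trans with (RInt (fun _ => d / s + sqrt 2 * sqrt (d / s)) 0 (d / s)).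
    + apply RInt_le; [lra | | |].
      { apply ex_RInt_of_continuous. intros. apply continuous_a_B_integrand; auto. }
      { apply ex_RInt_of_continuous. intros; apply continuous_const. }
      intros x Hx. apply Rle_trans with (Rabs (mean_tanh x)); [apply a_B_integrand_le; auto |].
      apply Rle_trans with (x + sqrt 2 * sqrt x); [apply Rabs_mean_tanh_le; lra |].
      apply Rplus_le_compat; [lra |]. apply Rmult_le_compat_l; [apply sqrt_pos |].
      apply sqrt_le_1_alt. lra.
    + rewrite RInt_const. change (scal ?u ?v) with (u * v). right. ring.
Qed.

Lemma a_B_div_le s d : 0 < s -> 0 < d <= s ->
  a_B s d / (2 * d) <= 3 * sqrt (d / s) / (2 * s).
Proof.
  intros Hs [Hd Hds]. set (u := d / s).
  assert (Hu : 0 < u <= 1).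
  { split; [apply Rdiv_lt_0_compat | apply Rle_div_l]; lra. }
  pose proof (sqrt_sqrt u ltac:(lra)). pose proof (sqrt_pos u).
  pose proof (sqrt_pos 2). pose proof sqrt2_sq.
  (* for [u <= 1]: [u <= sqrt u] and [sqrt 2 < 2] *)
  assert (Hb : u + sqrt 2 * sqrt u <= 3 * sqrt u) by nra.
  destruct (a_B_bounds s d Hs Hd) as [_ Ha].
  replace (3 * sqrt u / (2 * s)) with (u * (3 * sqrt u) / (2 * d)) by (unfold u; field; lra).
  apply Rmult_le_compat_r; [apply Rlt_le, Rinv_0_lt_compat; lra |].
  apply Rle_trans with (u * (u + sqrt 2 * sqrt u)); [exact Ha |].
  apply Rmult_le_compat_l; lra.
Qed.

Lemma a_B_div_2delta_lim s : 0 < s ->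
  limit1_in (fun delta => a_B s delta / (2 * delta)) (fun delta => 0 < delta) 0 0.
Proof.
  intros Hs eps Heps.
  set (w := 2 * s * eps / 3).
  assert (Hw : 0 < w) by (unfold w; nra).
  exists (s * Rmin 1 (w * w)). split; [apply Rmult_lt_0_compat; [| apply Rmin_pos]; nra |].
  intros d [Hd Hdist]. simpl in *. unfold R_dist in *.
  rewrite Rminus_0_r, Rabs_right in Hdist by lra. rewrite Rminus_0_r.
  pose proof (Rmin_l 1 (w * w)). pose proof (Rmin_r 1 (w * w)).
  assert (Hu : d / s < w * w).
  { apply Rlt_div_l; [lra |]. nra. }
  assert (Hsq : sqrt (d / s) < w).
  { rewrite <- (sqrt_square w) by lra. apply sqrt_lt_1_alt.
    split; [apply Rlt_le, Rdiv_lt_0_compat |]; lra. }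
  pose proof (a_B_div_le s d Hs ltac:(nra)) as Hdiv.
  assert (0 <= a_B s d / (2 * d))
    by (apply Rdiv_le_0_compat; [apply (a_B_bounds s d Hs Hd) | lra]).
  rewrite Rabs_right by lra.
  apply Rle_lt_trans with (3 * sqrt (d / s) / (2 * s)); [exact Hdiv |].
  apply Rlt_div_l; [lra |]. unfold w in Hsq. lra.
Qed.

Theorem theorem1 (sigma2 : R) (Hs : 0 < sigma2) :
  (forall rho, 0 <= rho ->
     improper_int_R (fun x => gauss x * tanh (rho - sqrt rho * x))
                    (1 - mmse_B rho)) /\
  (forall delta, 0 < delta ->
     improper_int_0_inf
       (fun rho => phi_inv sigma2 delta rho - psi_opt_B sigma2 delta rho)
       (a_B sigma2 delta)) /\
  limit1_in (fun delta => a_B sigma2 delta / (2 * delta))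
            (fun delta => 0 < delta) 0 0 /\
  limit1_in (fun delta => R_AC sigma2 delta)
            (fun delta => 0 < delta) (C_G sigma2) 0.
Proof.
  split; [| split; [| split]].
  - intros rho _. rewrite mmse_B_mean_tanh.
    replace (1 - (1 - mean_tanh rho)) with (mean_tanh rho) by ring. apply mean_tanh_spec.
  - intros delta Hd. rewrite (a_B_RInt sigma2 delta Hs Hd).
    apply improper_int_0_inf_a_B_integrand; auto.
  - apply a_B_div_2delta_lim, Hs.
  - rewrite <- (Rminus_0_r (C_G sigma2)).
    apply (limit_minus (fun _ => C_G sigma2)); [apply (limit_free (fun _ => C_G sigma2) _ 0) |].
    apply a_B_div_2delta_lim, Hs.
Qed.
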